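(* Let $\vartheta=\vartheta_{\{a,b,c\}}^{\mathcal B,h}$ be a $3$-molecule with base $\{a,b,c\}$ and further vertices $v_1,\dots,v_h$, and let $C_3$ be the $3$-cycle on vertices $\{a,v_1,z\}$, where $z$ is a new vertex. Let $G=C_3+_{av_1}\vartheta$ be the $2$-sum of $C_3$ and $\vartheta$ along the edge $av_1$ (present in both). If $\{a,v_1\}$ is not contained in any minimal edge cover set of $\vartheta$, then $\mathrm{Ent}(G)\ge4$.
   Context: Graphs are finite and undirected; connectivity of a graph is the largest $k$ such that one must remove at least $k$ vertices to disconnect it (by convention $K_m$, $m\ge3$, has connectivity $m-1$). $3$-molecule: for $h\ge1$, base $\{a,b,c\}$ and a set $\mathcal B$ of edges among $a,b,c$, $\vartheta_{\{a,b,c\}}^{\mathcal B,h}$ has vertex set $\{a,b,c,v_1,\dots,v_h\}$ and edge set $\mathcal B\cup\{v_ix:1\le i\le h,\ x\in\{a,b,c\}\}$, with the requirement $h\ge 3-k'$, $k'$ the connectivity of the subgraph induced by $\{a,b,c\}$. $2$-sum: for graphs $G_1,G_2$ and edges $e_1=a_1b_1\in E_{G_1}$, $e_2=a_2b_2\in E_{G_2}$, $G_1+_{e_1e_2}G_2$ is obtained from the disjoint union by identifying $a_1$ with $a_2$ and $b_1$ with $b_2$ and deleting $e_1$ and $e_2$ (here the edge $av_1$ of $C_3$ is identified with the edge $av_1$ of $\vartheta$). An edge cover set is a set of vertices containing an endpoint of every edge; a minimal edge cover set means one of minimum cardinality (for a $3$-molecule this cardinality is $3$). Entanglement: in the game $\mathrm{Ent}(G,k)$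 Thief plays against $k$ cops. Initially no cop is placed and Thief picks a vertex. Each round, Cops may do nothing, place a new cop (at most $k$ in total) on Thief's current vertex, or move a placed cop to Thief's current vertex; then Thief must move along an edge to an adjacent vertex not occupied by a cop, and is caught if he cannot. Infinite plays are won by Thief. $\mathrm{Ent}(G)$ is the least $k$ for which Cops have a winning strategy. *)

From mathcomp Require Import all_boot.
Set Implicit Arguments. Unset Strict Implicit. Unset Printing Implicit Defensive.

Section Graphs.
Variable T : finType.

Definition induced_connected (e : rel T) (U : {set T}) : bool :=
  [forall x in U, forall y in U,
     connect [rel u v | [&& e u v, u \in U & v \in U]] x y].

(* removing S disconnects the graph, or leaves at most one vertex
   (this gives K_m connectivity m-1, and 0 for disconnected graphs) *)
Definition is_cut (e : rel T) (S : {set T}) : bool :=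
  (#|~: S| <= 1) || ~~ induced_connected e (~: S).

Definition connectivity (e : rel T) : nat :=
  \big[minn/#|T|]_(S : {set T} | is_cut e S) #|S|.

Definition edge_cover (e : rel T) (S : {set T}) : bool :=
  [forall x, forall y, e x y ==> (x \in S) || (y \in S)].

(* minimal edge cover set = edge cover set of minimum cardinality *)
Definition min_edge_cover (e : rel T) (S : {set T}) : bool :=
  edge_cover e S && [forall S' : {set T}, edge_cover e S' ==> (#|S| <= #|S'|)].

Inductive cop_move := Stay | Place | MoveFrom of T.

Definition move_valid (k : nat) (C : {set T}) (m : cop_move) : bool :=
  match m with
  | Stay => true
  | Place => #|C| < k
  | MoveFrom u => u \in C
  end.

Definition apply_move (t : T) (C : {set T}) (m : cop_move) : {set T} :=
  match m with
  | Stay => C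
  | Place => t |: C
  | MoveFrom u => t |: (C :\ u)
  end.

(* Cops strategy: depends on the history t_0 ... t_n of Thief positions
   (the rest of the history is determined by the strategy itself) *)
Definition strategy := seq T -> cop_move.

Definition hist (t : nat -> T) (n : nat) : seq T := mkseq t n.+1.

Fixpoint cops (s : strategy) (t : nat -> T) (n : nat) : {set T} :=
  match n with
  | 0 => set0
  | n'.+1 => apply_move (t n') (cops s t n') (s (hist t n'))
  end.

Definition thief_legal (e : rel T) (s : strategy) (t : nat -> T) (n : nat) :=
  e (t n) (t n.+1) && (t n.+1 \notin cops s t n.+1).

Definition legal_upto (e : rel T) (s : strategy) (t : nat -> T) (n : nat) :=
  forall i, i < n -> thief_legal e s t i.

Definition winning_strategy (e : rel T) (k : nat) (s : strategy) : Prop :=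
  (forall (t : nat -> T) (n : nat), legal_upto e s t n ->
      move_valid k (cops s t n) (s (hist t n)))
  /\ ~ (exists t : nat -> T, forall n, thief_legal e s t n).

Definition cops_win (e : rel T) (k : nat) : Prop :=
  exists s : strategy, winning_strategy e k s.

End Graphs.

(* vertices: inl 0 = a, inl 1 = b, inl 2 = c, inr i = v_(i+1) *)
Notation mol_vert h := ('I_3 + 'I_h)%type.

Definition mol_rel (B : rel 'I_3) (h : nat) : rel (mol_vert h) :=
  fun x y => match x, y with
  | inl i, inl j => B i j
  | inl _, inr _ => true
  | inr _, inl _ => true
  | inr _, inr _ => false
  end.
Arguments mol_rel B h : clear implicits.

Definition mol_a (h : nat) : mol_vert h := inl ord0.
Arguments mol_a h : clear implicits.
Definition mol_v1 (h : nat) (hh : 0 < h) : mol_vert h := inr (Ordinal hh).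

(* 2-sum C_3 +_{a v1} theta, C_3 on {a, v1, z}; None = z *)
Definition twosum_rel (B : rel 'I_3) (h : nat) (hh : 0 < h)
  : rel (option (mol_vert h)) :=
  fun x y => match x, y with
  | Some u, Some w => mol_rel B h u w &&
      ~~ (((u == mol_a h) && (w == mol_v1 hh)) || ((u == mol_v1 hh) && (w == mol_a h)))
  | None, Some w => (w == mol_a h) || (w == mol_v1 hh)
  | Some u, None => (u == mol_a h) || (u == mol_v1 hh)
  | None, None => false
  end.

From mathcomp Require Import all_boot all_order.
Import Order.TTheory.
Set Implicit Arguments. Unset Strict Implicit. Unset Printing Implicit Defensive.

(* Thief beats k cops on any graph containing a loopless subgraph H in which,
   whenever at most k vertices are blocked and the current vertex v still has a
   free neighbour, some free neighbour of v has a free neighbour itself.  Thief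
   always moves to such a neighbour; the only cop that can arrive meanwhile lands
   on v, which is not a neighbour of v, so the invariant survives forever.
   For h >= 3 such an H (for k = 3) is spanned by z, a, b, c, v1, v2, v3; for
   h = 2 it also needs the base edges bc and ab (or ac).  The hypothesis on edge
   covers supplies them: an edge cover of a 3-molecule has at least 3 vertices,
   so {a, v1, v2} would be a minimal one if bc were missing, and {a, v1, b} is
   always one when h = 1, which therefore cannot occur; the connectivity
   condition makes a adjacent to b or c. *)

Definition nbhd (U : finType) (r : rel U) (v : U) : {set U} := [set w | r v w].

Definition escapes (U : finType) (r : rel U) (k : nat) : Prop :=
  forall v (D : {set U}), #|D| <= k -> ~~ (nbhd r v \subset D) ->
    exists w, [&& r v w, w \notin D & ~~ (nbhd r w \subset D)].

Lemma escapes_le (U : finType) (r : rel U) k m : k <= m -> escapes r m -> escapes r k.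
Proof. by move=> le_km esc v D le_Dk; apply: esc; apply: leq_trans le_km. Qed.

Lemma card_preimset_le (aT rT : finType) (f : aT -> rT) (A : {set rT}) :
  injective f -> #|f @^-1: A| <= #|A|.
Proof.
move=> inj_f; rewrite -(card_imset _ inj_f); apply: subset_leq_card.
by apply/subsetP => _ /imsetP[x + ->]; rewrite inE.
Qed.

Section CopsMoves.
Variable T : finType.

Lemma cops_prefix (s : strategy T) (t t' : nat -> T) n :
  (forall i, i < n -> t i = t' i) -> cops s t n = cops s t' n.
Proof.
elim: n => [//|n IHn] eq_tt' /=.
have eq_hist : hist t n = hist t' n.
  by apply/eq_in_map => i; rewrite mem_iota => /andP[_ lt_in]; apply: eq_tt'.
by rewrite IHn ?eq_hist ?eq_tt' // => i lt_in; apply: eq_tt'; apply: ltnW.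
Qed.

Lemma card_apply_move k (C : {set T}) t m :
  #|C| <= k -> move_valid k C m -> #|apply_move t C m| <= k.
Proof.
case: m => [//|/=|u] /= le_Ck.
  by move=> lt_Ck; rewrite cardsU1; apply: leq_trans lt_Ck; case: (t \notin C).
move=> uC; rewrite cardsU1; move: le_Ck; rewrite (cardsD1 u C) uC add1n => lt_Ck.
by case: (t \notin C :\ u) => //; apply: ltnW.
Qed.

Lemma apply_move_sub (C : {set T}) t m : apply_move t C m \subset t |: C.
Proof.
case: m => [|//|u] /=; first exact: subsetUr.
by apply: setUS; apply: subsetDl.
Qed.

End CopsMoves.

Section ThiefStrategy.
Variables (T U : finType) (e : rel T) (eH : rel U) (phi : U -> T).

Definition free_step (C : {set T}) (v w : U) : bool :=
  [&& eH v w, phi w \notin C & ~~ (nbhd eH w \subset phi @^-1: C)].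

Definition thief_next (C : {set T}) (v : U) : U := odflt v [pick w | free_step C v w].

Lemma thief_nextP C v : (exists w, free_step C v w) -> free_step C v (thief_next C v).
Proof.
by move=> [w free_w]; rewrite /thief_next; case: pickP => [//|/(_ w)]; rewrite free_w.
Qed.

Hypotheses (inj_phi : injective phi) (phi_edge : {homo phi : x y / eH x y >-> e x y})
  (irr_e : irreflexive e).
Variable k : nat.
Hypothesis escapes_eH : escapes eH k.

Section Play.
Variables (s : strategy T) (u0 : U).

(* The cops' position after round [size p - 1] depends only on the first
   [size p] positions (cops_prefix), so the partial play [p] fixes Thief's move. *)
Definition extend_play (p : seq U) : seq U :=
  rcons p (thief_next (cops s (fun i => phi (nth u0 p i)) (size p)) (last u0 p)).

Definition thief_play (n : nat) : U := nth u0 (iter n extend_play [:: u0]) n.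

Lemma size_iter_extend n : size (iter n extend_play [:: u0]) = n.+1.
Proof. by elim: n => //= n IHn; rewrite size_rcons IHn. Qed.

Lemma nth_iter_extend m i : i <= m -> nth u0 (iter m extend_play [:: u0]) i = thief_play i.
Proof.
elim: m => [|m IHm]; first by rewrite leqn0 => /eqP->.
rewrite leq_eqVlt => /orP[/eqP-> //|lt_im].
by rewrite /= nth_rcons size_iter_extend lt_im IHm.
Qed.

Lemma thief_play_next n :
  thief_play n.+1 = thief_next (cops s (phi \o thief_play) n.+1) (thief_play n).
Proof.
rewrite {1}/thief_play iterS /extend_play nth_rcons size_iter_extend ltnn eqxx.
rewrite -nth_last size_iter_extend nth_iter_extend //.
by congr thief_next; apply: cops_prefix => i lt_in; rewrite /= nth_iter_extend.
Qed.

Let t := phi \o thief_play.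

Lemma thief_play_invariant (w0 : U) : eH u0 w0 ->
  (forall n, legal_upto e s t n -> move_valid k (cops s t n) (s (hist t n))) ->
  forall n, [/\ legal_upto e s t n, #|cops s t n| <= k
               & ~~ (nbhd eH (thief_play n) \subset phi @^-1: cops s t n)].
Proof.
move=> u0w0 valid; elim=> [|n [legal_n card_n free_n]].
  split=> //; first by rewrite cards0.
  by apply/subsetPn; exists w0; rewrite !inE.
set v := thief_play n; set C := cops s t n.+1.
have card_C : #|C| <= k by apply: card_apply_move card_n (valid _ legal_n).
have sub_C : C \subset phi v |: cops s t n by apply: apply_move_sub.
have free_v : ~~ (nbhd eH v \subset phi @^-1: C).
  apply: contra free_n => /subsetP sub_v; apply/subsetP => w vw.
  have := sub_v w vw; rewrite !inE => /(subsetP sub_C).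
  rewrite !inE => /orP[/eqP/inj_phi w_v|//].
  by move: vw; rewrite inE w_v => /phi_edge; rewrite irr_e.
have card_preC : #|phi @^-1: C| <= k by apply: leq_trans (card_preimset_le C inj_phi) card_C.
have [w /and3P[vw wC w_free]] := escapes_eH card_preC free_v.
have /and3P[v_next next_C next_free] : free_step C v (thief_play n.+1).
  rewrite thief_play_next; apply: thief_nextP; exists w.
  by move: wC; rewrite /free_step vw inE => ->.
split=> //.
move=> i; rewrite ltnS leq_eqVlt => /orP[/eqP-> | /legal_n //].
by rewrite /thief_legal phi_edge.
Qed.

End Play.

Theorem escapes_not_cops_win (u0 w0 : U) : eH u0 w0 -> ~ cops_win e k.
Proof.
move=> u0w0 [s [valid not_play]]; apply: not_play.
exists (phi \o thief_play s u0) => n.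
by have [legal _ _] := thief_play_invariant u0w0 (valid _) n.+1; apply: legal.
Qed.

End ThiefStrategy.

Fixpoint tuples_of (s : seq nat) (k : nat) : seq (seq nat) :=
  if k is k'.+1 then [seq x :: l | x <- s, l <- tuples_of s k'] else [:: [::]].

Lemma mem_tuples_of s l : all (fun x => x \in s) l -> l \in tuples_of s (size l).
Proof. by elim: l => //= x l IHl /andP[xs /IHl]; apply: allpairs_f. Qed.

Section NatGraphs.
Variables (n : nat) (r : rel nat).

Definition nbhd_within (v : nat) (L : seq nat) : bool :=
  all (fun w => r v w ==> (w \in L)) (iota 0 n).

(* The vertices are [0, n); a set of at most k blocked vertices is a k-tuple over
   [0, n], where n stands for an empty slot. *)
Definition escape_check (k : nat) : bool :=
  all (fun v => all (fun L => ~~ nbhd_within v L ==>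
          has (fun w => [&& r v w, w \notin L & ~~ nbhd_within w L]) (iota 0 n))
        (tuples_of (iota 0 n.+1) k))
      (iota 0 n).

Definition ord_rel : rel 'I_n := fun x y => r x y.

Lemma nbhd_withinE (v : 'I_n) (D : {set 'I_n}) L :
  (forall w : 'I_n, (val w \in L) = (w \in D)) ->
  nbhd_within v L = (nbhd ord_rel v \subset D).
Proof.
move=> memL; apply/allP/subsetP => [sub w | sub w].
  by rewrite inE -memL => vw; apply: (implyP (sub w _)); rewrite // mem_iota ltn_ord.
rewrite mem_iota => /andP[_ lt_wn]; apply/implyP => vw.
by rewrite (memL (Ordinal lt_wn)) sub // inE.
Qed.

Lemma small_set_tuple k (D : {set 'I_n}) : #|D| <= k ->
  exists2 L, L \in tuples_of (iota 0 n.+1) k & forall w : 'I_n, (val w \in L) = (w \in D).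
Proof.
move=> le_Dk; set L := map val (enum D) ++ nseq (k - #|D|) n.
exists L => [|w].
  have <- : size L = k by rewrite size_cat size_map size_nseq -cardE subnKC.
  apply: mem_tuples_of; rewrite /L all_cat all_nseq mem_iota leq0n add0n ltnSn orbT andbT.
  by apply/allP => _ /mapP[x _ ->]; rewrite mem_iota leq0n add0n ltnS (ltnW (ltn_ord x)).
rewrite /L mem_cat mem_nseq (ltn_eqF (ltn_ord w)) andbF orbF.
by rewrite mem_map ?mem_enum //; apply: val_inj.
Qed.

Lemma escapes_of_check k : escape_check k -> escapes ord_rel k.
Proof.
move=> check v D le_Dk free_v; have [L tupL memL] := small_set_tuple le_Dk.
move: check => /allP/(_ v); rewrite mem_iota ltn_ord => /(_ isT) /allP/(_ L tupL).
rewrite (nbhd_withinE v memL) free_v => /hasP[w]; rewrite mem_iota => /andP[_ lt_wn].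
move=> /and3P[vw wL w_free]; exists (Ordinal lt_wn).
by rewrite /ord_rel vw -memL wL -(nbhd_withinE _ memL) w_free.
Qed.

End NatGraphs.

Definition edge_rel (E : seq (nat * nat)) : rel nat :=
  fun x y => ((x, y) \in E) || ((y, x) \in E).

Lemma edge_list_not_cops_win (T : finType) (e : rel T) (E : seq (nat * nat))
    (L : seq T) (x0 : T) k m (u0 w0 : 'I_(size L)) :
  irreflexive e -> uniq L ->
  all (fun p => e (nth x0 L p.1) (nth x0 L p.2) && e (nth x0 L p.2) (nth x0 L p.1)) E ->
  escape_check (size L) (edge_rel E) m -> k <= m -> edge_rel E u0 w0 ->
  ~ cops_win e k.
Proof.
move=> irr_e uniqL edgesE check le_km u0w0.
apply: (escapes_not_cops_win (eH := ord_rel (edge_rel E)) (phi := fun i => nth x0 L i)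
  _ _ irr_e _ u0w0).
- by move=> i j /eqP; rewrite nth_uniq // => /eqP/val_inj.
- by move=> i j /orP[] /(allP edgesE) /andP[].
- exact: escapes_le le_km (escapes_of_check check).
Qed.

Lemma connectivity_le (T : finType) (e : rel T) (S : {set T}) :
  is_cut e S -> connectivity e <= #|S|.
Proof. by move=> cutS; rewrite /connectivity -minEnat -leEnat bigmin_le_cond. Qed.

Lemma connectivity_le_degree (T : finType) (e : rel T) (x : T) :
  irreflexive e -> connectivity e <= #|nbhd e x|.
Proof.
move=> irr_e; apply: connectivity_le; rewrite /is_cut leqNgt.
have [two_out|//] := boolP (1 < #|~: nbhd e x|).
have x_out : x \in ~: nbhd e x by rewrite !inE irr_e.
move: two_out; rewrite (cardsD1 x) x_out add1n ltnS card_gt0 => /set0Pn[y].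
rewrite !inE => /andP[y_x y_out]; apply/negP => /forallP/(_ x)/implyP/(_ x_out).
move=> /forallP/(_ y)/implyP; rewrite !inE => /(_ y_out) /connectP[[|u p] /= path_p y_last].
  by move: y_x; rewrite y_last eqxx.
by move: path_p; rewrite !inE => /andP[/and3P[xu _]]; rewrite xu.
Qed.

Lemma min_edge_cover_of_card (T : finType) (e : rel T) (S : {set T}) m :
  edge_cover e S -> #|S| <= m -> (forall S', edge_cover e S' -> m <= #|S'|) ->
  min_edge_cover e S.
Proof.
move=> coverS le_Sm ge_m; rewrite /min_edge_cover coverS.
by apply/forallP => S'; apply/implyP => /ge_m; apply: leq_trans le_Sm.
Qed.

Notation base_b := (Ordinal (isT : 1 < 3)).
Notation base_c := (Ordinal (isT : 2 < 3)).

Lemma ord3P (i : 'I_3) : [\/ i = ord0, i = base_b | i = base_c].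
Proof.
by case: i => [[|[|[|//]]] p]; [constructor 1|constructor 2|constructor 3]; apply: val_inj.
Qed.

Lemma card_set3_le (T : finType) (x y z : T) : #|[set x; y; z]| <= 3.
Proof.
by apply: leq_trans (leq_card_setU _ _) _; rewrite cards2 cards1 addn1 !ltnS leq_b1.
Qed.

Section Molecule.
Variables (B : rel 'I_3) (h : nat).
Hypotheses (irrB : irreflexive B) (conn_h : 3 - connectivity B <= h).

Lemma mol_edge_cover_ge3 (S : {set mol_vert h}) : edge_cover (mol_rel B h) S -> 3 <= #|S|.
Proof.
move=> coverS.
have cover x y : mol_rel B h x y -> (x \in S) || (y \in S).
  exact/implyP/(forallP (forallP coverS x) y).
have [/forallP baseS | /forallPn[x xS]] := boolP [forall i, inl i \in S].
  apply: (@leq_trans #|inl @: [set: 'I_3] : {set mol_vert h}|).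
    by rewrite card_imset ?cardsT ?card_ord //; apply: inl_inj.
  by apply: subset_leq_card; apply/subsetP => _ /imsetP[i _ ->].
(* Missing a base vertex x forces all h apexes and the neighbours of x into S. *)
have apexS i : inr i \in S by move: (cover (inl x) (inr i) isT); rewrite (negbTE xS).
have nbhdS i : B x i -> inl i \in S.
  by move=> xi; move: (cover (inl x) (inl i) xi); rewrite (negbTE xS).
have disj : [disjoint inr @: [set: 'I_h] & inl @: nbhd B x].
  rewrite disjoint_subset; apply/subsetP => _ /imsetP[i _ ->].
  by rewrite !inE; apply/negP => /imsetP[j _].
have sub_S : inr @: [set: 'I_h] :|: inl @: nbhd B x \subset S.
  apply/subsetP => u /setUP[] /imsetP[i]; first by move=> _ ->.
  by rewrite inE => /nbhdS + ->.
apply: leq_trans (subset_leq_card sub_S); move: disj; rewrite -(leq_card_setU _ _).2.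
move=> /eqP->; rewrite !card_imset ?cardsT ?card_ord; try exact: inl_inj; try exact: inr_inj.
apply: leq_trans (leq_add conn_h (connectivity_le_degree x irrB)).
by rewrite addnC -leq_subLR.
Qed.

Lemma mol_min_edge_cover (S : {set mol_vert h}) :
  (forall i, inr i \in S) -> (forall i j, B i j -> (inl i \in S) || (inl j \in S)) ->
  #|S| <= 3 -> min_edge_cover (mol_rel B h) S.
Proof.
move=> apexS baseS le_S3; apply: min_edge_cover_of_card le_S3 mol_edge_cover_ge3.
apply/forallP => -[i|i]; apply/forallP => -[j|j] /=;
  by rewrite ?apexS ?orbT //; apply/implyP/baseS.
Qed.

End Molecule.

Lemma mol1_min_edge_cover (B : rel 'I_3) (hh : 0 < 1) :
  irreflexive B -> 3 - connectivity B <= 1 ->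
  min_edge_cover (mol_rel B 1) [set mol_a 1; mol_v1 hh; inl base_b].
Proof.
move=> irrB conn_1; apply: mol_min_edge_cover (card_set3_le _ _ _) => // [i|i j].
  by rewrite !inE (ord1 i).
by rewrite !inE; case: (ord3P i) => ->; case: (ord3P j) => -> //; rewrite irrB.
Qed.

Lemma mol2_min_edge_cover (B : rel 'I_3) (hh : 0 < 2) :
  irreflexive B -> symmetric B -> 3 - connectivity B <= 2 -> ~~ B base_b base_c ->
  min_edge_cover (mol_rel B 2) [set mol_a 2; mol_v1 hh; inr (Ordinal (isT : 1 < 2))].
Proof.
move=> irrB symB conn_2 nBbc; apply: mol_min_edge_cover (card_set3_le _ _ _) => //.
  by move=> [[|[|//]] p]; rewrite !inE.
move=> i j; rewrite !inE; case: (ord3P i) => ->; case: (ord3P j) => -> //.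
all: by rewrite ?irrB ?(negbTE nBbc) // symB (negbTE nBbc).
Qed.

Lemma mol2_a_adjacent (B : rel 'I_3) :
  irreflexive B -> 3 - connectivity B <= 2 -> B ord0 base_b || B ord0 base_c.
Proof.
move=> irrB conn_2; have: 0 < #|nbhd B ord0|.
  by apply: leq_trans (connectivity_le_degree ord0 irrB); move: conn_2; rewrite leq_subLR addn2.
rewrite card_gt0 => /set0Pn[y]; rewrite inE.
by case: (ord3P y) => -> Bay; [rewrite irrB in Bay | rewrite Bay | rewrite Bay orbT].
Qed.

Lemma twosum_rel_irr (B : rel 'I_3) h (hh : 0 < h) :
  irreflexive B -> irreflexive (twosum_rel B hh).
Proof. by move=> irrB [[i|i]|] //=; rewrite irrB. Qed.

(* Vertices 0 = z, 1 = a, 2 = b, 3 = c, i.+4 = v_(i+1).  Both graphs consist of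
   the path a z v1 (what is left of C_3), the edges from v1 to b and c, and the
   edges from the remaining apexes to a, b and c; escape_graph2 adds ab and bc. *)
Definition escape_graph3 : seq (nat * nat) :=
  [:: (0, 1); (0, 4); (4, 2); (4, 3); (5, 1); (5, 2); (5, 3); (6, 1); (6, 2); (6, 3)].

Definition escape_graph2 : seq (nat * nat) :=
  [:: (0, 1); (0, 4); (4, 2); (4, 3); (5, 1); (5, 2); (5, 3); (1, 2); (2, 3)].

Lemma escape_check_graph3 : escape_check 7 (edge_rel escape_graph3) 3.
Proof. by vm_compute. Qed.

Lemma escape_check_graph2 : escape_check 6 (edge_rel escape_graph2) 3.
Proof. by vm_compute. Qed.

Lemma not_cops_win_h3 (B : rel 'I_3) h (hh : 0 < h.+3) k :
  irreflexive B -> k <= 3 -> ~ cops_win (twosum_rel B hh) k.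
Proof.
move=> irrB le_k3.
by apply: (@edge_list_not_cops_win _ _ escape_graph3
  [:: None; Some (mol_a h.+3); Some (inl base_b); Some (inl base_c); Some (mol_v1 hh);
      Some (inr (Ordinal (isT : 1 < h.+3))); Some (inr (Ordinal (isT : 2 < h.+3)))]
  None k 3 (Ordinal (isT : 0 < 7)) (Ordinal (isT : 1 < 7)) (twosum_rel_irr hh irrB)
  _ _ escape_check_graph3 le_k3 isT).
Qed.

Lemma not_cops_win_h2 (B : rel 'I_3) (hh : 0 < 2) k :
  irreflexive B -> symmetric B -> B base_b base_c -> B ord0 base_b || B ord0 base_c ->
  k <= 3 -> ~ cops_win (twosum_rel B hh) k.
Proof.
move=> irrB symB Bbc /orP[Bab|Bac] le_k3.
- apply: (@edge_list_not_cops_win _ _ escape_graph2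
    [:: None; Some (mol_a 2); Some (inl base_b); Some (inl base_c); Some (mol_v1 hh);
        Some (inr (Ordinal (isT : 1 < 2)))]
    None k 3 (Ordinal (isT : 0 < 6)) (Ordinal (isT : 1 < 6)) (twosum_rel_irr hh irrB)
    _ _ escape_check_graph2 le_k3 isT); first by [].
  by rewrite /= !andbT Bab Bbc (symB base_b) Bab (symB base_c) Bbc.
- apply: (@edge_list_not_cops_win _ _ escape_graph2
    [:: None; Some (mol_a 2); Some (inl base_c); Some (inl base_b); Some (mol_v1 hh);
        Some (inr (Ordinal (isT : 1 < 2)))]
    None k 3 (Ordinal (isT : 0 < 6)) (Ordinal (isT : 1 < 6)) (twosum_rel_irr hh irrB)
    _ _ escape_check_graph2 le_k3 isT); first by [].
  by rewrite /= !andbT Bac Bbc (symB base_c) Bac (symB base_c) Bbc.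
Qed.

Theorem mainTheorem11 (B : rel 'I_3) (h : nat) (hh : 0 < h) :
  irreflexive B -> symmetric B ->
  3 - connectivity B <= h ->
  (forall S : {set mol_vert h},
      min_edge_cover (mol_rel B h) S -> ~ (mol_a h \in S /\ mol_v1 hh \in S)) ->
  forall k : nat, cops_win (twosum_rel B hh) k -> 4 <= k.
Proof.
move=> irrB symB conn_h no_cover k win; rewrite leqNgt; apply/negP => le_k3.
case: h hh conn_h no_cover win => [//|[|[|h]]] hh conn_h no_cover win.
- by apply: (no_cover _ (mol1_min_edge_cover hh irrB conn_h)); rewrite !inE eqxx !orbT.
- have [Bbc|nBbc] := boolP (B base_b base_c).
    exact: not_cops_win_h2 irrB symB Bbc (mol2_a_adjacent irrB conn_h) le_k3 win.
  by apply: (no_cover _ (mol2_min_edge_cover hh irrB symB conn_h nBbc)); rewrite !inE eqxx ?orbT.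
- exact: not_cops_win_h3 irrB le_k3 win.
Qed.
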